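(* Let $T$ be a finite rooted tree in which every inner node has at least two children, with node set $V$ and leaf set $L$. There exists a family of four bi-colourings $(A_1,B_1),\dots,(A_4,B_4)$ of $L$ identifying $T$.
   Context: A bi-colouring is a pair $(A,B)$ of disjoint subsets of $L$ of equal cardinality. A pair $(\pi,\sigma)$ of injective maps from $S\subseteq V\setminus L$ to $L$ identifies $S$ if for each $s\in S$, $s$ is the least common ancestor of $\pi(s)$ and $\sigma(s)$ (every node is its own ancestor); for $s\in S$ a node $x$ is $s$-requested if it lies on the path from $\pi(s)$ to $\sigma(s)$; the pair has unique request if every node is $s$-requested for at most one $s\in S$. A bi-colouring $(A,B)$ identifies $S$ if some pair $(\pi,\sigma)$ identifying $S$ with unique request has $\pi(S)=A$, $\sigma(S)=B$. A family $(A_1,B_1),\dots,(A_n,B_n)$ of bi-colourings identifies $S$ if there is a partition $(S_1,\dots,S_n)$ of $S$ (parts possibly empty) with $(A_i,B_i)$ identifying $S_i$ for each $i$; it identifies $T$ if it identifies $V\setminus L$. The sets $A_i$, $A_j$, $B_j$ for $i\neq j$ need not be disjoint. *)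

From mathcomp Require Import all_boot.
Set Implicit Arguments. Unset Strict Implicit. Unset Printing Implicit Defensive.

Section Trees.
Variables (V : finType) (r : V) (p : V -> V).

(* (r, p) is a finite rooted tree with root r: the root is its own parent
   and every node reaches the root by iterating the parent map (this forces
   acyclicity). *)
Definition rooted_tree : Prop := p r = r /\ forall v, exists k, iter k p v = r.

Definition ancestor (u v : V) : Prop := exists k, iter k p v = u.

Definition children (u : V) : {set V} := [set v | (v != r) && (p v == u)].

Definition leaves : {set V} := [set u | children u == set0].

Definition inner : {set V} := ~: leaves.

Definition is_lca (a b s : V) : Prop :=
  [/\ ancestor s a, ancestor s b &
      forall t, ancestor t a -> ancestor t b -> ancestor t s].

(* z lies on the (tree) path from a to b: z is an ancestor of a or of b,
   and lies below (or at) every common ancestor of a and b. *)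
Definition on_path (a b z : V) : Prop :=
  (ancestor z a \/ ancestor z b) /\
  forall t, ancestor t a -> ancestor t b -> ancestor t z.

Definition bicolouring (A B : {set V}) : Prop :=
  [/\ A \subset leaves, B \subset leaves, [disjoint A & B] & #|A| = #|B|].

Definition pair_identifies (S : {set V}) (pi sigma : V -> V) : Prop :=
  [/\ {in S &, injective pi}, {in S &, injective sigma},
      (forall s, s \in S ->
         [/\ pi s \in leaves, sigma s \in leaves & is_lca (pi s) (sigma s) s])
    &
      forall x s1 s2, s1 \in S -> s2 \in S ->
        on_path (pi s1) (sigma s1) x -> on_path (pi s2) (sigma s2) x ->
        s1 = s2].

Definition bicol_identifies (A B S : {set V}) : Prop :=
  S \subset inner /\
  exists pi sigma : V -> V,
    [/\ pair_identifies S pi sigma, pi @: S = A & sigma @: S = B].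

Definition family_identifies (n : nat) (A B : 'I_n -> {set V}) (S : {set V})
  : Prop :=
  exists P : 'I_n -> {set V},
    [/\ forall i j, i != j -> [disjoint P i & P j],
        \bigcup_(i < n) P i = S &
        forall i, bicol_identifies (A i) (B i) (P i)].

Definition family_identifies_tree (n : nat) (A B : 'I_n -> {set V}) : Prop :=
  family_identifies A B inner.

End Trees.

From mathcomp Require Import all_boot.
Set Implicit Arguments. Unset Strict Implicit. Unset Printing Implicit Defensive.

(* Choose two distinct children [f w] and [g w] of every inner node [w].  The
   node [s] is requested by the leaf [left_leaf s], reached from [f s] by always
   descending to the [g]-child, and by [right_leaf s], reached from [g s] by
   always descending to the [f]-child; [s] is their least common ancestor.
   Colour [s] by the parities of the numbers of [f]-edges and of [g]-edges on
   its path to the root.  If the requests of [s] and [s'] share a node, one of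
   them, say [s'], lies strictly below [s] on one of the two descending paths
   of [s]; between [s] and [s'] that path has exactly one [f]-edge (or exactly
   one [g]-edge), so [s] and [s'] get different colours.  Each of the four
   colour classes is thus identified by one bi-colouring. *)

Section Ancestor.
Variables (V : finType) (p : V -> V).

Lemma ancestor_refl u : ancestor p u u.
Proof. by exists 0. Qed.

Lemma ancestor_trans a b c : ancestor p a b -> ancestor p b c -> ancestor p a c.
Proof. by move=> [k <-] [m <-]; exists (k + m); rewrite iterD. Qed.

Lemma ancestor_parent c : ancestor p (p c) c.
Proof. by exists 1. Qed.

Lemma ancestor_eq_or_parent y c : ancestor p y c -> y = c \/ ancestor p y (p c).
Proof. by move=> [[|k] <-]; [left | right; exists k; rewrite -iterSr]. Qed.

Lemma ancestor_total a b x :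
  ancestor p a x -> ancestor p b x -> ancestor p a b \/ ancestor p b a.
Proof.
move=> [k <-] [m <-]; case: (leqP k m) => [le_km | /ltnW le_mk].
  by right; exists (m - k); rewrite -iterD subnK.
by left; exists (k - m); rewrite -iterD subnK.
Qed.

Lemma on_path_left a b : on_path p a b a.
Proof. by split=> [|t //]; left; apply: ancestor_refl. Qed.

Lemma on_path_right a b : on_path p a b b.
Proof. by split=> [|t //]; right; apply: ancestor_refl. Qed.

End Ancestor.

Section RootedTree.
Variables (V : finType) (r : V) (p : V -> V).
Hypothesis tree : rooted_tree r p.

Lemma iter_root n : iter n p r = r.
Proof. by case: tree => pr _; elim: n => //= n ->. Qed.

Lemma iter_card_root u : iter #|V| p u = r.
Proof.
have [k iter_k] := tree.2 u.
have conn : fconnect p u r by rewrite -iter_k fconnect_iter.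
have le_card : findex p u r <= #|V| := leq_trans (ltnW (findex_max conn)) (max_card _).
by rewrite -(subnK le_card) iterD (iter_findex conn) iter_root.
Qed.

Lemma iter_cycle_root b n : 0 < n -> iter n p b = b -> b = r.
Proof.
move=> n_gt0 cycle_b.
have iter_mul j : iter (n * j) p b = b.
  by elim: j => [|j IH]; rewrite ?muln0 // mulnS iterD IH.
by rewrite -(iter_mul #|V|) -(subnK (leq_pmull #|V| n_gt0)) iterD iter_card_root iter_root.
Qed.

Lemma ancestor_antisym a b : ancestor p a b -> ancestor p b a -> a = b.
Proof.
move=> [k iter_k] [m iter_m].
have [/eqP | km_gt0] := posnP (m + k).
  by rewrite addn_eq0 => /andP[_ /eqP k0]; rewrite -iter_k k0.
have b_root : b = r by apply: (iter_cycle_root km_gt0); rewrite iterD iter_k.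
by rewrite -iter_k b_root iter_root.
Qed.

Lemma childrenP u c : reflect (c != r /\ p c = u) (c \in children r p u).
Proof. by rewrite inE; apply: (iffP andP) => -[-> /eqP]. Qed.

Lemma ancestor_child u c : c \in children r p u -> ancestor p u c.
Proof. by move=> /childrenP[_ <-]; apply: ancestor_parent. Qed.

Lemma not_ancestor_parent c : c != r -> ~ ancestor p c (p c).
Proof.
move=> c_nroot anc_c; have pc_c := ancestor_antisym (ancestor_parent p c) anc_c.
by move: c_nroot; rewrite -(@iter_cycle_root c 1) ?eqxx.
Qed.

Lemma ancestor_between c y z :
  ancestor p c z -> ancestor p y z -> ancestor p (p c) y -> y != p c ->
  ancestor p c y.
Proof.
move=> anc_cz anc_yz anc_pc_y y_npc.
have [// | /ancestor_eq_or_parent [-> | anc_y_pc]] := ancestor_total anc_cz anc_yz.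
  exact: ancestor_refl.
by rewrite (ancestor_antisym anc_y_pc anc_pc_y) eqxx in y_npc.
Qed.

Lemma children_disjoint_descendants s c1 c2 t :
  c1 \in children r p s -> c2 \in children r p s -> c1 != c2 ->
  ancestor p c1 t -> ancestor p c2 t -> False.
Proof.
have incomparable d1 d2 : d1 \in children r p s -> d2 \in children r p s ->
    d1 != d2 -> ~ ancestor p d1 d2.
  move=> /childrenP[d1_nroot pd1] /childrenP[_ pd2] d12.
  move=> /ancestor_eq_or_parent[d1_d2 | ]; first by rewrite d1_d2 eqxx in d12.
  by rewrite pd2 -pd1; apply: not_ancestor_parent.
move=> ch1 ch2 c12 anc1 anc2; have [] := ancestor_total anc1 anc2.
  exact: incomparable.
by apply: incomparable; rewrite // eq_sym.
Qed.

Definition hchild (h : V -> V) u := (u != r) && (u == h (p u)).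

(* [#|V|.+1] iterates of [p] reach the root from any node. *)
Definition hdepth (h : V -> V) v := count (hchild h) (traject p v #|V|.+1).

Lemma hchild_root h : hchild h r = false.
Proof. by rewrite /hchild eqxx. Qed.

Lemma count_hchild_traject h v :
  count (hchild h) (traject p v #|V|.+1) = count (hchild h) (traject p v #|V|).
Proof.
by rewrite trajectSr iter_card_root -cats1 count_cat [count _ [:: r]]/= hchild_root !addn0.
Qed.

Lemma hdepth_child h c : c != r -> hdepth h c = hchild h c + hdepth h (p c).
Proof. by move=> c_nroot; rewrite /hdepth [in RHS]count_hchild_traject trajectS. Qed.

Lemma hchild_childE h u c : c \in children r p u -> hchild h c = (c == h u).
Proof. by move=> /childrenP[c_nroot <-]; rewrite /hchild c_nroot. Qed.

Lemma hdepth_le_card h v : hdepth h v <= #|V|.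
Proof. by rewrite /hdepth count_hchild_traject -{2}(size_traject p v #|V|) count_size. Qed.

Section Descent.
Variable h : V -> V.
Hypothesis h_child : forall w, w \in inner r p -> h w \in children r p w.

Definition descend_step v := if v \in leaves r p then v else h v.

Definition descend u := iter #|V|.+1 descend_step u.

Lemma descend_step_child v :
  v \notin leaves r p -> descend_step v \in children r p v.
Proof. by move=> v_inner; rewrite /descend_step (negbTE v_inner) h_child ?in_setC. Qed.

Lemma ancestor_iter_descend_step n u : ancestor p u (iter n descend_step u).
Proof.
elim: n => [|n IH] /=; first exact: ancestor_refl.
set z := iter n _ u; have [z_leaf | z_inner] := boolP (z \in leaves r p).
  by rewrite /descend_step z_leaf.
exact: ancestor_trans IH (ancestor_child (descend_step_child z_inner)).
Qed.

Lemma descend_stepE v : v \notin leaves r p -> descend_step v = h v.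
Proof. by rewrite /descend_step => /negbTE ->. Qed.

Lemma hdepth_iter_descend_step n u :
  iter n descend_step u \notin leaves r p ->
  hdepth h (iter n descend_step u) = n + hdepth h u.
Proof.
elim: n => [// | n IH] /=; set z := iter n _ u.
have [z_leaf | z_inner] := boolP (z \in leaves r p).
  by rewrite /descend_step z_leaf z_leaf.
move=> _; have z_child := descend_step_child z_inner.
have /childrenP[child_nroot pz] := z_child.
by rewrite hdepth_child // pz (hchild_childE _ z_child) descend_stepE // eqxx (IH z_inner).
Qed.

Lemma descend_leaf u : descend u \in leaves r p.
Proof.
apply: contraT => not_leaf; have := hdepth_le_card h (descend u).
by rewrite /descend hdepth_iter_descend_step // addSn ltnNge leq_addr.
Qed.

(* Descending by [h] never uses an edge chosen by [h'], so [hdepth h'] stays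
   constant along the way. *)
Lemma hdepth_iter_descend h' n u y :
  (forall w, w \in inner r p -> h' w != h w) ->
  ancestor p u y -> ancestor p y (iter n descend_step u) -> hdepth h' y = hdepth h' u.
Proof.
move=> neq_h; elim: n y => [|n IH] y /= anc_uy; first by move/(ancestor_antisym anc_uy) ->.
set z := iter n _ u; have [z_leaf | z_inner] := boolP (z \in leaves r p).
  by rewrite /descend_step z_leaf; apply: IH.
have z_child := descend_step_child z_inner; have /childrenP[child_nroot pz] := z_child.
move=> /ancestor_eq_or_parent[-> | ]; last by rewrite pz; apply: IH.
rewrite hdepth_child // pz (hchild_childE _ z_child) descend_stepE // eq_sym.
rewrite (negbTE (neq_h _ _)); last by rewrite in_setC.
exact: IH (ancestor_iter_descend_step _ _) (ancestor_refl _ _).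
Qed.

End Descent.

Lemma hdepth_below_arm (h1 h2 : V -> V) s y :
  (forall w, w \in inner r p -> h1 w \in children r p w) ->
  (forall w, w \in inner r p -> h2 w \in children r p w) ->
  (forall w, w \in inner r p -> h1 w != h2 w) ->
  s \in inner r p -> ancestor p y (descend h2 (h1 s)) -> ancestor p s y -> y != s ->
  hdepth h1 y = (hdepth h1 s).+1.
Proof.
move=> h1_child h2_child neq_h s_inner anc_y anc_sy y_ns.
have s_child := h1_child s s_inner; have /childrenP[c_nroot pc] := s_child.
have anc_cy : ancestor p (h1 s) y.
  by apply: ancestor_between (ancestor_iter_descend_step h2_child _ _) anc_y _ _; rewrite pc.
rewrite (hdepth_iter_descend h2_child neq_h anc_cy anc_y) hdepth_child // pc.
by rewrite (hchild_childE _ s_child) eqxx.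
Qed.

Definition nth_child k w := nth w (enum (children r p w)) k.

Lemma nth_child_children k w : k < #|children r p w| -> nth_child k w \in children r p w.
Proof. by rewrite cardE => k_lt; rewrite -mem_enum mem_nth. Qed.

Lemma nth_child_neq w : 1 < #|children r p w| -> nth_child 0 w != nth_child 1 w.
Proof. by rewrite cardE => two; rewrite /nth_child nth_uniq ?enum_uniq // ltnW. Qed.

Section ChildChoice.
Variables f g : V -> V.
Hypothesis f_child : forall w, w \in inner r p -> f w \in children r p w.
Hypothesis g_child : forall w, w \in inner r p -> g w \in children r p w.
Hypothesis fg_neq : forall w, w \in inner r p -> f w != g w.

Let gf_neq w : w \in inner r p -> g w != f w.
Proof. by rewrite eq_sym; apply: fg_neq. Qed.

Definition left_leaf s := descend g (f s).
Definition right_leaf s := descend f (g s).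

Definition colour s := odd (hdepth f s) + (odd (hdepth g s)).*2.

Lemma colour_lt4 s : colour s < 4.
Proof. by rewrite /colour; do 2!case: (odd _). Qed.

Lemma colour_odd_hdepth s t : colour s = colour t ->
  odd (hdepth f s) = odd (hdepth f t) /\ odd (hdepth g s) = odd (hdepth g t).
Proof. by rewrite /colour; do 4!case: (odd _). Qed.

Lemma ancestor_left_leaf s : ancestor p (f s) (left_leaf s).
Proof. exact: ancestor_iter_descend_step g_child _ _. Qed.

Lemma ancestor_right_leaf s : ancestor p (g s) (right_leaf s).
Proof. exact: ancestor_iter_descend_step f_child _ _. Qed.

Lemma is_lca_leaves s : s \in inner r p -> is_lca p (left_leaf s) (right_leaf s) s.
Proof.
move=> s_inner; have fs := f_child s_inner; have gs := g_child s_inner.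
have /childrenP[_ pfs] := fs; have /childrenP[_ pgs] := gs.
have anc_l := ancestor_trans (ancestor_child fs) (ancestor_left_leaf s).
have anc_r := ancestor_trans (ancestor_child gs) (ancestor_right_leaf s).
split=> // t anc_tl anc_tr; have [anc_st | //] := ancestor_total anc_l anc_tl.
have [-> | t_ns] := eqVneq t s; first exact: ancestor_refl.
case: (children_disjoint_descendants fs gs (fg_neq s_inner) (t := t)).
  by apply: ancestor_between (ancestor_left_leaf s) anc_tl _ _; rewrite pfs.
by apply: ancestor_between (ancestor_right_leaf s) anc_tr _ _; rewrite pgs.
Qed.

Lemma colour_neq_below_leaves s1 s2 :
  s1 \in inner r p -> ancestor p s1 s2 -> s2 != s1 ->
  ancestor p s2 (left_leaf s1) \/ ancestor p s2 (right_leaf s1) ->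
  colour s1 != colour s2.
Proof.
move=> s_inner anc12 s21 below; apply/eqP => /colour_odd_hdepth[odd_f odd_g].
case: below => [anc_l | anc_r].
  move: odd_f; rewrite (hdepth_below_arm f_child g_child fg_neq s_inner anc_l anc12 s21).
  by rewrite oddS; case: odd.
move: odd_g; rewrite (hdepth_below_arm g_child f_child gf_neq s_inner anc_r anc12 s21).
by rewrite oddS; case: odd.
Qed.

Lemma unique_request_below s1 s2 x :
  s1 \in inner r p -> colour s1 = colour s2 -> ancestor p s1 s2 -> ancestor p s2 x ->
  on_path p (left_leaf s1) (right_leaf s1) x -> s1 = s2.
Proof.
move=> s_inner col12 anc12 anc2x [above_x _].
have [// | s21] := eqVneq s2 s1.
have below : ancestor p s2 (left_leaf s1) \/ ancestor p s2 (right_leaf s1).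
  by case: above_x => [anc_l | anc_r]; [left | right]; apply: ancestor_trans anc2x _.
by move: (colour_neq_below_leaves s_inner anc12 s21 below); rewrite col12 eqxx.
Qed.

Lemma unique_request s1 s2 x :
  s1 \in inner r p -> s2 \in inner r p -> colour s1 = colour s2 ->
  on_path p (left_leaf s1) (right_leaf s1) x ->
  on_path p (left_leaf s2) (right_leaf s2) x -> s1 = s2.
Proof.
move=> s1_inner s2_inner col12 on1 on2.
have [anc_l1 anc_r1 _] := is_lca_leaves s1_inner.
have [anc_l2 anc_r2 _] := is_lca_leaves s2_inner.
have anc1x : ancestor p s1 x by case: on1 => _; apply.
have anc2x : ancestor p s2 x by case: on2 => _; apply.
have [anc12 | anc21] := ancestor_total anc1x anc2x.
  exact: unique_request_below s1_inner col12 anc12 anc2x on1.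
exact/esym/(unique_request_below s2_inner (esym col12) anc21 anc1x on2).
Qed.

Definition colour_class (i : nat) := [set s in inner r p | colour s == i].

Lemma colour_classE i s : (s \in colour_class i) = (s \in inner r p) && (colour s == i).
Proof. by rewrite in_set. Qed.

Lemma colour_class_inner i s : s \in colour_class i -> s \in inner r p.
Proof. by rewrite colour_classE => /andP[]. Qed.

Lemma unique_request_class i s1 s2 x :
  s1 \in colour_class i -> s2 \in colour_class i ->
  on_path p (left_leaf s1) (right_leaf s1) x ->
  on_path p (left_leaf s2) (right_leaf s2) x -> s1 = s2.
Proof.
rewrite !colour_classE => /andP[s1_inner /eqP col1] /andP[s2_inner /eqP col2].
by apply: unique_request; rewrite ?col1 ?col2.
Qed.

Lemma left_leaf_inj i : {in colour_class i &, injective left_leaf}.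
Proof.
move=> s1 s2 c1 c2 l12; apply: (unique_request_class c1 c2 (on_path_left _ _ _)).
by rewrite l12; apply: on_path_left.
Qed.

Lemma right_leaf_inj i : {in colour_class i &, injective right_leaf}.
Proof.
move=> s1 s2 c1 c2 r12; apply: (unique_request_class c1 c2 (on_path_right _ _ _)).
by rewrite r12; apply: on_path_right.
Qed.

Lemma colour_class_bicolouring i :
  bicolouring r p (left_leaf @: colour_class i) (right_leaf @: colour_class i).
Proof.
split.
- by apply/subsetP => _ /imsetP[s _ ->]; apply: descend_leaf.
- by apply/subsetP => _ /imsetP[s _ ->]; apply: descend_leaf.
- rewrite -setI_eq0; apply/set0Pn => -[_ /setIP[/imsetP[s1 c1 ->] /imsetP[s2 c2 l_eq_r]]].
  have s12 : s1 = s2.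
    apply: (unique_request_class c1 c2 (on_path_left _ _ _)).
    by rewrite l_eq_r; apply: on_path_right.
  subst s2; have s_inner := colour_class_inner c1.
  apply: (children_disjoint_descendants (f_child s_inner) (g_child s_inner) (fg_neq s_inner)).
    exact: ancestor_left_leaf.
  by rewrite l_eq_r; apply: ancestor_right_leaf.
- by rewrite !card_in_imset //; [apply: right_leaf_inj | apply: left_leaf_inj].
Qed.

Lemma colour_class_identifies i :
  bicol_identifies r p (left_leaf @: colour_class i) (right_leaf @: colour_class i)
    (colour_class i).
Proof.
split; first by apply/subsetP => s /colour_class_inner.
exists left_leaf, right_leaf; split=> //; split.
- exact: left_leaf_inj.
- exact: right_leaf_inj.
- move=> s /colour_class_inner s_inner.
  by split; [apply: descend_leaf | apply: descend_leaf | apply: is_lca_leaves].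
- by move=> x s1 s2; apply: unique_request_class.
Qed.

Lemma colour_classes_disjoint i j : i != j -> [disjoint colour_class i & colour_class j].
Proof.
move=> ij; rewrite -setI_eq0; apply/set0Pn => -[s /setIP[]].
by rewrite !colour_classE => /andP[_ /eqP ci] /andP[_ /eqP cj]; rewrite -ci -cj eqxx in ij.
Qed.

Lemma bigcup_colour_class : \bigcup_(i < 4) colour_class i = inner r p.
Proof.
apply/setP => s; apply/bigcupP/idP => [[i _ /colour_class_inner //] | s_inner].
by exists (Ordinal (colour_lt4 s)); rewrite // colour_classE s_inner /=.
Qed.

End ChildChoice.
End RootedTree.

Theorem corollary3p10 (V : finType) (r : V) (p : V -> V) :
  rooted_tree r p ->
  (forall u, u \in inner r p -> 2 <= #|children r p u|) ->
  exists A B : 'I_4 -> {set V},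
    (forall i, bicolouring r p (A i) (B i)) /\
    family_identifies_tree r p A B.
Proof.
move=> tree two_children.
pose f := nth_child r p 0; pose g := nth_child r p 1.
have f_child w : w \in inner r p -> f w \in children r p w.
  by move=> /two_children /ltnW; apply: nth_child_children.
have g_child w : w \in inner r p -> g w \in children r p w.
  by move=> /two_children; apply: nth_child_children.
have fg_neq w : w \in inner r p -> f w != g w.
  by move=> /two_children; apply: nth_child_neq.
exists (fun i : 'I_4 => left_leaf r p f g @: colour_class r p f g i).
exists (fun i : 'I_4 => right_leaf r p f g @: colour_class r p f g i).
split=> [i | ]; first exact: colour_class_bicolouring.
exists (fun i : 'I_4 => colour_class r p f g i); split.
- by move=> i j; rewrite -val_eqE; apply: colour_classes_disjoint.
- exact: bigcup_colour_class.
- by move=> i; apply: colour_class_identifies.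
Qed.
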